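(* Fix a client $k$ and $\lambda\in[0,1)$. Let $\mathcal H\subseteq\mathbb R^n$ be a closed convex parameter set of diameter at most $R$. Let $\widehat{\mathcal D}_k$ be an empirical distribution of $m_k$ samples and $\widehat{\mathcal C}$ an empirical distribution of $m_C$ samples. Assume that for every sample $z$ the per-sample loss $h\mapsto \ell(h,z)$ is $\mu$-strongly convex on $\mathcal H$ and has (sub)gradients of norm at most $G$ on $\mathcal H$. Define \[ g(h)=\lambda\,\mathcal L_{\widehat{\mathcal D}_k}(h)+(1-\lambda)\,\mathcal L_{\widehat{\mathcal C}}(h),\qquad h_{\widehat\lambda}=\arg\min_{h\in\mathcal H}g(h),\qquad h_c=\arg\min_{h\in\mathcal H}\mathcal L_{\widehat{\mathcal C}}(h), \] and $\epsilon_\lambda=\sqrt{\frac{\lambda^2}{m_k}+\frac{(1-\lambda)^2}{m_C}}$. Let \[ r\ge G^2\left(\frac{4G}{\mu}+2R\right)^2,\qquad \eta=\frac{1}{G\sqrt{r m_k}}\min\left(\frac{2G\lambda}{\mu(1-\lambda)},R\right). \] Run $T=r\,m_k$ steps of projected stochastic gradient descent on $g$ with step size $\eta$, starting from $h_c$, where at each step one independently selects $\widehat{\mathcal D}_k$ with probability $\lambda$ and $\widehat{\mathcal C}$ with probability $1-\lambda$, draws a uniformly random sample from the selected empirical distribution, and uses the gradient of the loss at that sample; let $h_A$ be the average of the iterates. Then \[ \mathbb E\big[g(h_A)\big]\le g(h_{\widehat\lambda})+\epsilon_\lambda, \] where the expectation is over the randomness of the SGD sampling.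
   Context: This is the analysis of the data-interpolation scheme for personalization: a client with local empirical data $\widehat{\mathcal D}_k$ trains on a $\lambda$-mixture of its local data and global/cluster data $\widehat{\mathcal C}$, starting from the central model $h_c$. For a (empirical) distribution $\mathcal D$, $\mathcal L_{\mathcal D}(h)=\mathbb E_{z\sim\mathcal D}[\ell(h,z)]$, where hypotheses are identified with their parameter vectors $h\in\mathcal H$. *)

From Stdlib Require Import Reals Lra List.
Open Scope R_scope.

(* Vectors of R^n are represented as functions nat -> R vanishing at indices >= n. *)
Definition vec := nat -> R.
Definition in_Rn (n : nat) (x : vec) : Prop := forall i, (n <= i)%nat -> x i = 0.

Fixpoint fsum (k : nat) (f : nat -> R) : R :=
  match k with O => 0 | S k' => fsum k' f + f k' end.

Definition vadd (x y : vec) : vec := fun i => x i + y i.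
Definition vsub (x y : vec) : vec := fun i => x i - y i.
Definition vscale (a : R) (x : vec) : vec := fun i => a * x i.
Definition dot (n : nat) (x y : vec) : R := fsum n (fun i => x i * y i).
Definition vnorm (n : nat) (x : vec) : R := sqrt (dot n x x).

Definition subset_Rn (n : nat) (H : vec -> Prop) : Prop := forall x, H x -> in_Rn n x.
Definition convex_in (H : vec -> Prop) : Prop :=
  forall x y t, H x -> H y -> 0 <= t <= 1 -> H (vadd (vscale t x) (vscale (1 - t) y)).
Definition closed_in_Rn (n : nat) (H : vec -> Prop) : Prop :=
  forall x, in_Rn n x ->
    (forall eps, 0 < eps -> exists y, H y /\ vnorm n (vsub x y) < eps) -> H x.
Definition diam_le (n : nat) (H : vec -> Prop) (D : R) : Prop :=
  forall x y, H x -> H y -> vnorm n (vsub x y) <= D.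

Definition is_projection (n : nat) (H : vec -> Prop) (P : vec -> vec) : Prop :=
  forall x, in_Rn n x -> H (P x) /\ forall y, H y -> vnorm n (vsub x (P x)) <= vnorm n (vsub x y).

Definition strongly_convex_on (n : nat) (H : vec -> Prop) (mu : R) (f : vec -> R) : Prop :=
  forall x y t, H x -> H y -> 0 <= t <= 1 ->
    f (vadd (vscale t x) (vscale (1 - t) y))
      <= t * f x + (1 - t) * f y - mu / 2 * t * (1 - t) * (vnorm n (vsub x y))^2.

Definition is_subgradient_on (n : nat) (H : vec -> Prop) (f : vec -> R) (x s : vec) : Prop :=
  forall y, H y -> f y >= f x + dot n s (vsub y x).

Definition emp_loss {Z : Type} (loss : vec -> Z -> R) (m : nat) (z : nat -> Z) (h : vec) : R :=
  / INR m * fsum m (fun i => loss h (z i)).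

Definition g_obj {Z : Type} (loss : vec -> Z -> R) (lam : R)
  (mk : nat) (zk : nat -> Z) (mC : nat) (zC : nat -> Z) (h : vec) : R :=
  lam * emp_loss loss mk zk h + (1 - lam) * emp_loss loss mC zC h.

Definition is_argmin_on (H : vec -> Prop) (f : vec -> R) (h : vec) : Prop :=
  H h /\ forall h', H h' -> f h <= f h'.

(* A sampling choice: (true, i) = sample i of the local data D_k,
   (false, j) = sample j of the global/cluster data C. *)
Definition choice := (bool * nat)%type.

Definition sample_of {Z : Type} (zk zC : nat -> Z) (c : choice) : Z :=
  if fst c then zk (snd c) else zC (snd c).

(* Trajectory of projected SGD: the iterates h_0, ..., h_{T-1} at which
   gradients are evaluated, when the choice sequence has length T. *)
Fixpoint sgd_traj {Z : Type} (P : vec -> vec) (gr : vec -> Z -> vec) (eta : R)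
  (zk zC : nat -> Z) (h : vec) (s : list choice) : list vec :=
  match s with
  | nil => nil
  | c :: s' => h :: sgd_traj P gr eta zk zC
                  (P (vsub h (vscale eta (gr h (sample_of zk zC c))))) s'
  end.

Fixpoint vsum_list (l : list vec) : vec :=
  match l with nil => fun _ => 0 | h :: l' => vadd h (vsum_list l') end.

Definition sgd_avg {Z : Type} (P : vec -> vec) (gr : vec -> Z -> vec) (eta : R)
  (zk zC : nat -> Z) (h0 : vec) (T : nat) (s : list choice) : vec :=
  vscale (/ INR T) (vsum_list (sgd_traj P gr eta zk zC h0 s)).

(* Expectation of F over T i.i.d. choices: each step picks D_k with prob. lam
   (then a uniform index < mk) or C with prob. 1 - lam (then a uniform index < mC). *)
Fixpoint expect (lam : R) (mk mC : nat) (T : nat) (F : list choice -> R) : R :=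
  match T with
  | O => F nil
  | S t =>
      lam * (/ INR mk * fsum mk (fun i => expect lam mk mC t (fun s => F ((true, i) :: s))))
      + (1 - lam) * (/ INR mC * fsum mC (fun j => expect lam mk mC t (fun s => F ((false, j) :: s))))
  end.

From Stdlib Require Import Reals Lra Lia List FunctionalExtensionality.
Open Scope R_scope.

(* Starting projected SGD at the minimiser h_c of the global loss pays off because h_c is
   already close to the minimiser of the mixture: strong convexity of the global loss and
   G-Lipschitzness of the local loss give |h_c - h_lam| <= 2 G lam / (mu (1 - lam)), and
   of course |h_c - h_lam| <= R.  The standard online-to-batch argument (one-step
   expansion of |h_t - h_lam|^2, unbiasedness of the sampled subgradient, Jensen for the
   average) bounds the expected gap by (D^2 + T eta^2 G^2) / (2 eta T) whenever
   |h_c - h_lam| <= D; the step size eta = D / (G sqrt T) turns this into D G / sqrt T,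
   and the choice of r makes D G / sqrt T <= lam / sqrt m_k <= eps_lam. *)

Lemma fsum_ext k f g : (forall i, (i < k)%nat -> f i = g i) -> fsum k f = fsum k g.
Proof. induction k; simpl; intros Hf; auto. rewrite IHk, Hf; auto; intros; apply Hf; lia. Qed.

Lemma fsum_add k f g : fsum k f + fsum k g = fsum k (fun i => f i + g i).
Proof. induction k; simpl; [lra|]. rewrite <- IHk; ring. Qed.

Lemma fsum_scal k a f : a * fsum k f = fsum k (fun i => a * f i).
Proof. induction k; simpl; [ring|]. rewrite <- IHk; ring. Qed.

Lemma fsum_const k c : fsum k (fun _ => c) = INR k * c.
Proof. induction k; simpl fsum; [simpl; ring|]. rewrite IHk, S_INR; ring. Qed.

Lemma fsum_affine k a b c f g :
  fsum k (fun i => a + b * f i + c * g i) = INR k * a + b * fsum k f + c * fsum k g.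
Proof. rewrite <- fsum_const, !fsum_scal, !fsum_add. apply fsum_ext; intros; ring. Qed.

Lemma fsum_le k f g : (forall i, (i < k)%nat -> f i <= g i) -> fsum k f <= fsum k g.
Proof.
  induction k; simpl; intros Hf; [lra|].
  apply Rplus_le_compat; [apply IHk; intros|]; apply Hf; lia.
Qed.

Lemma fsum_nonneg k f : (forall i, (i < k)%nat -> 0 <= f i) -> 0 <= fsum k f.
Proof. intros Hf. rewrite <- (Rmult_0_r (INR k)), <- fsum_const. apply fsum_le; auto. Qed.

Lemma mean_le_comb m a b c t s K : (0 < m)%nat ->
  (forall i, (i < m)%nat -> a i <= t * b i + s * c i + K) ->
  / INR m * fsum m a <= t * (/ INR m * fsum m b) + s * (/ INR m * fsum m c) + K.
Proof.
  intros Hm Hi. assert (HR : 0 < INR m) by (apply lt_0_INR; lia).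
  apply fsum_le in Hi.
  replace (fsum m (fun i => t * b i + s * c i + K)) with (INR m * K + t * fsum m b + s * fsum m c)
    in Hi by (rewrite <- fsum_affine; apply fsum_ext; intros; ring).
  apply Rmult_le_reg_l with (INR m); auto.
  replace (INR m * (/ INR m * fsum m a)) with (fsum m a) by (field; lra).
  replace (INR m * (t * (/ INR m * fsum m b) + s * (/ INR m * fsum m c) + K))
    with (INR m * K + t * fsum m b + s * fsum m c) by (field; lra).
  exact Hi.
Qed.

Definition nsq n x := dot n x x.

Ltac fsum_id := unfold nsq, dot, vsub, vadd, vscale;
  rewrite ?fsum_scal, ?fsum_add; apply fsum_ext; intros; cbv beta; ring.

Lemma nsq_nonneg n x : 0 <= nsq n x.
Proof. apply fsum_nonneg; intros; apply Rle_0_sqr. Qed.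

Lemma vnorm_sq n x : vnorm n x ^ 2 = nsq n x.
Proof. unfold vnorm; apply pow2_sqrt, nsq_nonneg. Qed.

Lemma vnorm_nonneg n x : 0 <= vnorm n x.
Proof. apply sqrt_pos. Qed.

Lemma vnorm_vsub_sym n x y : vnorm n (vsub x y) = vnorm n (vsub y x).
Proof. unfold vnorm. f_equal. fsum_id. Qed.

Lemma cauchy_schwarz n x y : dot n x y <= vnorm n x * vnorm n y.
Proof.
  set (X := dot n x x). set (Y := dot n y y). set (Pd := dot n x y).
  assert (Hq : forall a, 0 <= a ^ 2 * X + (-2 * a) * Pd + Y).
  { intros a. replace (a ^ 2 * X + (-2 * a) * Pd + Y) with (nsq n (vsub (vscale a x) y))
      by (unfold X, Y, Pd; fsum_id). apply nsq_nonneg. }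
  assert (HX : 0 <= X) by apply nsq_nonneg. assert (HY : 0 <= Y) by apply nsq_nonneg.
  (* the discriminant of the nonnegative quadratic a |-> |a x - y|^2 is nonpositive *)
  assert (Hd : Pd ^ 2 <= X * Y).
  { destruct (Req_dec X 0) as [H0|H0].
    - destruct (Req_dec Pd 0) as [H1|H1]; [rewrite H1, H0; lra|].
      specialize (Hq ((Y + 1) / (2 * Pd))). rewrite H0 in Hq.
      replace (((Y + 1) / (2 * Pd)) ^ 2 * 0 + -2 * ((Y + 1) / (2 * Pd)) * Pd + Y) with (-1)
        in Hq by (field; auto). lra.
    - specialize (Hq (Pd / X)).
      replace ((Pd / X) ^ 2 * X + -2 * (Pd / X) * Pd + Y) with (Y - Pd ^ 2 / X) in Hq
        by (field; auto).
      apply Rmult_le_reg_r with (/ X); [apply Rinv_0_lt_compat; lra|].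
      replace (X * Y * / X) with Y by (field; lra). unfold Rdiv in Hq; lra. }
  unfold vnorm. fold X Y. rewrite <- sqrt_mult by auto.
  apply Rle_trans with (Rabs Pd); [apply Rle_abs|].
  rewrite <- sqrt_Rsqr_abs. apply sqrt_le_1_alt. unfold Rsqr. simpl in Hd. lra.
Qed.

Lemma dot_ge_neg_norm n x y : - (vnorm n x * vnorm n y) <= dot n x y.
Proof.
  pose proof (cauchy_schwarz n (vscale (-1) x) y) as Hcs.
  replace (dot n (vscale (-1) x) y) with (-1 * dot n x y) in Hcs by fsum_id.
  replace (vnorm n (vscale (-1) x)) with (vnorm n x) in Hcs by (unfold vnorm; f_equal; fsum_id).
  lra.
Qed.

(* The variational inequality <x - P x, y - P x> <= 0 is extracted from minimality of
   |x - P x| along the segment [P x, y]. *)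
Lemma projection_nsq_le n H P x y : convex_in H -> is_projection n H P -> in_Rn n x -> H y ->
  nsq n (vsub (P x) y) <= nsq n (vsub x y).
Proof.
  intros Hc Hp Hx Hy. destruct (Hp x Hx) as [HPx Hmin].
  set (p := P x) in *.
  set (A := nsq n (vsub x p)). set (B := dot n (vsub x p) (vsub y p)).
  set (C := nsq n (vsub y p)).
  assert (HC : 0 <= C) by apply nsq_nonneg.
  assert (HB : B <= 0).
  { destruct (Rle_or_lt B 0) as [h|h]; auto. exfalso.
    set (t := B / (B + C)).
    assert (Ht : 0 < t <= 1).
    { unfold t; split; [apply Rdiv_lt_0_compat; lra|].
      apply Rmult_le_reg_r with (B + C); [lra|]. field_simplify; lra. }
    specialize (Hmin _ (Hc y p t Hy HPx ltac:(lra))).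
    apply sqrt_le_0 in Hmin; try apply nsq_nonneg.
    replace (dot n (vsub x (vadd (vscale t y) (vscale (1 - t) p)))
                   (vsub x (vadd (vscale t y) (vscale (1 - t) p))))
      with (A + (-2 * t) * B + t ^ 2 * C) in Hmin by (unfold A, B, C; fsum_id).
    change (dot n (vsub x p) (vsub x p)) with A in Hmin.
    assert (h2 : 2 * B <= t * C) by (apply Rmult_le_reg_l with t; [lra|]; nra).
    assert (h3 : t * C <= B).
    { unfold t. apply Rmult_le_reg_r with (B + C); [lra|].
      replace (B / (B + C) * C * (B + C)) with (B * C) by (field; lra). nra. }
    lra. }
  replace (nsq n (vsub p y)) with C by (unfold C; fsum_id).
  replace (nsq n (vsub x y)) with (A + (-2) * B + C) by (unfold A, B, C; fsum_id).
  pose proof (nsq_nonneg n (vsub x p)) as HA. fold A in HA. lra.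
Qed.

Definition convex_on (H : vec -> Prop) (f : vec -> R) : Prop :=
  forall x y t, H x -> H y -> 0 <= t <= 1 ->
    f (vadd (vscale t x) (vscale (1 - t) y)) <= t * f x + (1 - t) * f y.

Lemma strongly_convex_convex n H mu f : 0 <= mu -> strongly_convex_on n H mu f -> convex_on H f.
Proof.
  intros Hmu Hf x y t Hx Hy Ht. specialize (Hf x y t Hx Hy Ht).
  assert (0 <= mu / 2 * t * (1 - t) * vnorm n (vsub x y) ^ 2)
    by (apply Rmult_le_pos; [repeat apply Rmult_le_pos; lra|apply pow2_ge_0]).
  lra.
Qed.

Lemma strongly_convex_emp_loss {Z : Type} n H mu (loss : vec -> Z -> R) m z : (0 < m)%nat ->
  (forall z, strongly_convex_on n H mu (fun h => loss h z)) ->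
  strongly_convex_on n H mu (emp_loss loss m z).
Proof.
  intros Hm Hsc x y t Hx Hy Ht. unfold emp_loss.
  set (K := mu / 2 * t * (1 - t) * vnorm n (vsub x y) ^ 2).
  enough (/ INR m * fsum m (fun i => loss (vadd (vscale t x) (vscale (1 - t) y)) (z i))
          <= t * (/ INR m * fsum m (fun i => loss x (z i)))
             + (1 - t) * (/ INR m * fsum m (fun i => loss y (z i))) + - K) by lra.
  apply mean_le_comb; auto. intros i _. specialize (Hsc (z i) x y t Hx Hy Ht). simpl in Hsc.
  unfold K; lra.
Qed.

Lemma strongly_convex_comb n H mu a f1 f2 : 0 <= a <= 1 ->
  strongly_convex_on n H mu f1 -> strongly_convex_on n H mu f2 ->
  strongly_convex_on n H mu (fun h => a * f1 h + (1 - a) * f2 h).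
Proof.
  intros Ha H1 H2 x y t Hx Hy Ht.
  specialize (H1 x y t Hx Hy Ht). specialize (H2 x y t Hx Hy Ht).
  apply Rmult_le_compat_l with (r := a) in H1; [|lra].
  apply Rmult_le_compat_l with (r := 1 - a) in H2; [|lra].
  lra.
Qed.

(* Letting t -> 0 in the strong convexity inequality between x and the minimiser hs. *)
Lemma strongly_convex_argmin_growth n H mu f hs x : convex_in H -> strongly_convex_on n H mu f ->
  is_argmin_on H f hs -> H x -> mu / 2 * nsq n (vsub x hs) <= f x - f hs.
Proof.
  intros Hc Hsc [Hhs Hmin] Hx.
  set (d := nsq n (vsub x hs)).
  assert (Ht : forall t, 0 < t <= 1 -> mu / 2 * (1 - t) * d <= f x - f hs).
  { intros t Ht. specialize (Hsc x hs t Hx Hhs ltac:(lra)).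
    rewrite vnorm_sq in Hsc. fold d in Hsc.
    pose proof (Hmin _ (Hc x hs t Hx Hhs ltac:(lra))).
    apply Rmult_le_reg_l with t; [lra|]. nra. }
  assert (H0 : 0 <= f x - f hs) by (specialize (Ht 1 ltac:(lra)); lra).
  destruct (Rle_or_lt (mu / 2 * d) (f x - f hs)) as [h|h]; auto. exfalso.
  set (b := mu / 2 * d) in *. set (a := f x - f hs) in *.
  specialize (Ht ((b - a) / (2 * b))).
  assert (Hbd : 0 < (b - a) / (2 * b) <= 1).
  { split; [apply Rdiv_lt_0_compat; lra|].
    apply Rmult_le_reg_r with (2 * b); [lra|]. field_simplify; lra. }
  specialize (Ht Hbd).
  replace (mu / 2 * (1 - (b - a) / (2 * b)) * d) with (b * (1 - (b - a) / (2 * b))) in Ht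
    by (unfold b; ring).
  replace (b * (1 - (b - a) / (2 * b))) with ((a + b) / 2) in Ht by (field; lra).
  lra.
Qed.

Lemma subgradient_sub_le n H f h s y G : is_subgradient_on n H f h s -> vnorm n s <= G -> H y ->
  f h - f y <= G * vnorm n (vsub h y).
Proof.
  intros Hs HsG Hy. specialize (Hs y Hy).
  pose proof (dot_ge_neg_norm n s (vsub y h)).
  rewrite <- vnorm_vsub_sym in H0.
  pose proof (vnorm_nonneg n (vsub h y)).
  assert (vnorm n s * vnorm n (vsub h y) <= G * vnorm n (vsub h y))
    by (apply Rmult_le_compat_r; auto).
  lra.
Qed.

Lemma emp_loss_sub_le {Z : Type} n H (loss : vec -> Z -> R) (gr : vec -> Z -> vec) G m z h y :
  (0 < m)%nat -> H y ->
  (forall z, is_subgradient_on n H (fun h' => loss h' z) h (gr h z)) ->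
  (forall z, vnorm n (gr h z) <= G) ->
  emp_loss loss m z h - emp_loss loss m z y <= G * vnorm n (vsub h y).
Proof.
  intros Hm Hy Hsub Hbd.
  enough (emp_loss loss m z h <= 1 * emp_loss loss m z y + 0 * emp_loss loss m z y
                                 + G * vnorm n (vsub h y)) by lra.
  apply mean_le_comb; auto. intros i _.
  pose proof (subgradient_sub_le n H _ h _ y G (Hsub (z i)) (Hbd (z i)) Hy). simpl in H0. lra.
Qed.

(* Moving from hc to w costs at least (1 - lam) mu d^2 / 2 on f2 and gains at most lam G d on f1. *)
Lemma interp_argmin_dist_le n H mu G lam f1 f2 hc w :
  convex_in H -> 0 < mu -> 0 <= G -> 0 <= lam < 1 -> strongly_convex_on n H mu f2 ->
  is_argmin_on H f2 hc -> is_argmin_on H (fun h => lam * f1 h + (1 - lam) * f2 h) w ->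
  f1 hc - f1 w <= G * vnorm n (vsub hc w) ->
  vnorm n (vsub hc w) <= 2 * G * lam / (mu * (1 - lam)).
Proof.
  intros Hc Hmu HG Hlam Hsc Hhc Hw Hlip.
  set (d := vnorm n (vsub hc w)) in *.
  assert (Hd : 0 <= d) by apply vnorm_nonneg.
  assert (Hgrowth : mu / 2 * d ^ 2 <= f2 w - f2 hc).
  { unfold d. rewrite vnorm_vsub_sym, vnorm_sq.
    apply (strongly_convex_argmin_growth n H); auto. apply Hw. }
  assert (Hmin : lam * f1 w + (1 - lam) * f2 w <= lam * f1 hc + (1 - lam) * f2 hc)
    by (apply Hw, Hhc).
  assert (Hk : (1 - lam) * (mu / 2 * d ^ 2) <= lam * (G * d)).
  { apply Rmult_le_compat_l with (r := 1 - lam) in Hgrowth; [|lra].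
    apply Rmult_le_compat_l with (r := lam) in Hlip; [|lra].
    lra. }
  destruct (Req_dec d 0) as [E0|E0].
  - rewrite E0. apply Rmult_le_pos; [nra|]. left; apply Rinv_0_lt_compat; nra.
  - apply Rmult_le_reg_r with (mu * (1 - lam) * d); [apply Rmult_lt_0_compat; nra|].
    replace (2 * G * lam / (mu * (1 - lam)) * (mu * (1 - lam) * d)) with (2 * (lam * (G * d)))
      by (field; split; lra).
    nra.
Qed.

Definition mix (lam : R) (mk mC : nat) (phi : choice -> R) : R :=
  lam * (/ INR mk * fsum mk (fun i => phi (true, i)))
  + (1 - lam) * (/ INR mC * fsum mC (fun j => phi (false, j))).

Lemma expect_S lam mk mC t F :
  expect lam mk mC (S t) F = mix lam mk mC (fun c => expect lam mk mC t (fun s => F (c :: s))).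
Proof. reflexivity. Qed.

Section Expectation.
Variables (lam : R) (mk mC : nat).
Hypothesis Hlam : 0 <= lam <= 1.
Hypothesis Hk : (0 < mk)%nat.
Hypothesis HC : (0 < mC)%nat.

Lemma mix_le phi psi : (forall c, phi c <= psi c) -> mix lam mk mC phi <= mix lam mk mC psi.
Proof.
  intros Hp. unfold mix.
  assert (0 < INR mk) by (apply lt_0_INR; lia). assert (0 < INR mC) by (apply lt_0_INR; lia).
  apply Rplus_le_compat; apply Rmult_le_compat_l; try lra;
    (apply Rmult_le_compat_l; [left; apply Rinv_0_lt_compat; lra|]);
    apply fsum_le; intros; apply Hp.
Qed.

Lemma mix_affine a b d phi psi :
  mix lam mk mC (fun c => a + b * phi c + d * psi c)
  = a + b * mix lam mk mC phi + d * mix lam mk mC psi.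
Proof.
  assert (0 < INR mk) by (apply lt_0_INR; lia). assert (0 < INR mC) by (apply lt_0_INR; lia).
  unfold mix. rewrite !(fsum_affine _ a b d). field. lra.
Qed.

Lemma mix_const_add a phi : mix lam mk mC (fun c => a + phi c) = a + mix lam mk mC phi.
Proof.
  transitivity (a + 1 * mix lam mk mC phi + 0 * mix lam mk mC phi); [|ring].
  rewrite <- mix_affine. f_equal. apply functional_extensionality; intros; ring.
Qed.

Lemma mix_scal a phi : mix lam mk mC (fun c => a * phi c) = a * mix lam mk mC phi.
Proof.
  transitivity (0 + a * mix lam mk mC phi + 0 * mix lam mk mC phi); [|ring].
  rewrite <- mix_affine. f_equal. apply functional_extensionality; intros; ring.
Qed.

Lemma expect_le T : forall F G, (forall s, length s = T -> F s <= G s) ->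
  expect lam mk mC T F <= expect lam mk mC T G.
Proof.
  induction T; intros F G HFG; [apply HFG; reflexivity|].
  rewrite !expect_S. apply mix_le. intros c. apply IHT. intros s Hs. apply HFG. simpl; lia.
Qed.

Lemma expect_const_add T : forall a F,
  expect lam mk mC T (fun s => a + F s) = a + expect lam mk mC T F.
Proof.
  induction T; intros a F; [reflexivity|].
  rewrite !expect_S, <- mix_const_add. f_equal.
  apply functional_extensionality; intros c. apply IHT.
Qed.

Lemma expect_scal T : forall a F,
  expect lam mk mC T (fun s => a * F s) = a * expect lam mk mC T F.
Proof.
  induction T; intros a F; [reflexivity|].
  rewrite !expect_S, <- mix_scal. f_equal.
  apply functional_extensionality; intros c. apply IHT.
Qed.

End Expectation.

Section Jensen.
Variables (H : vec -> Prop) (f : vec -> R).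
Hypothesis Hc : convex_in H.
Hypothesis Hf : convex_on H f.

Definition sumf (l : list vec) := fold_right (fun x acc => f x + acc) 0 l.

Lemma jensen l : l <> nil -> Forall H l ->
  H (vscale (/ INR (length l)) (vsum_list l)) /\
  f (vscale (/ INR (length l)) (vsum_list l)) <= / INR (length l) * sumf l.
Proof.
  induction l as [|x l IH]; intros Hn Hall; [congruence|].
  inversion Hall; subst.
  destruct l as [|y l'].
  - replace (vscale (/ INR (length (x :: nil))) (vsum_list (x :: nil))) with x.
    + split; auto. simpl. lra.
    + apply functional_extensionality; intros i. unfold vscale, vsum_list, vadd. simpl. field.
  - set (l := y :: l') in *.
    destruct (IH ltac:(discriminate) H3) as [HA Hfa].
    set (k := INR (length l)) in *.
    assert (Hk : 0 < k) by (unfold k; apply lt_0_INR; simpl; lia).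
    replace (INR (length (x :: l))) with (k + 1) by (unfold k; symmetry; apply S_INR).
    set (t := / (k + 1)).
    assert (Ht : 0 <= t <= 1).
    { unfold t; split; [left; apply Rinv_0_lt_compat; lra|].
      apply Rmult_le_reg_r with (k + 1); [lra|]. rewrite Rinv_l; lra. }
    replace (vscale t (vsum_list (x :: l))) with
      (vadd (vscale t x) (vscale (1 - t) (vscale (/ k) (vsum_list l)))).
    2: { apply functional_extensionality; intros i. unfold vscale, vadd, t. simpl vsum_list.
         unfold vadd. field. lra. }
    split; [apply Hc; auto|].
    eapply Rle_trans; [apply Hf; auto|].
    change (sumf (x :: l)) with (f x + sumf l).
    replace (t * (f x + sumf l)) with (t * f x + (1 - t) * (/ k * sumf l)) by (unfold t; field; lra).
    apply Rplus_le_compat_l. apply Rmult_le_compat_l; lra.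
Qed.
End Jensen.

Section SGD.
Variables (n : nat) (H : vec -> Prop) (Z : Type) (loss : vec -> Z -> R) (gr : vec -> Z -> vec)
  (G : R) (mk mC : nat) (zk zC : nat -> Z) (lam : R) (P : vec -> vec) (eta : R) (w : vec).
Hypothesis Hlam : 0 <= lam < 1.
Hypothesis HmK : (0 < mk)%nat.
Hypothesis HmC : (0 < mC)%nat.
Hypothesis Hsub : subset_Rn n H.
Hypothesis Hconv : convex_in H.
Hypothesis Hproj : is_projection n H P.
Hypothesis Hgr_Rn : forall h z, H h -> in_Rn n (gr h z).
Hypothesis Hgr_sub : forall h z, H h -> is_subgradient_on n H (fun h' => loss h' z) h (gr h z).
Hypothesis Hgr_bd : forall h z, H h -> vnorm n (gr h z) <= G.
Hypothesis Hw : H w.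

Let g := g_obj loss lam mk zk mC zC.
Let grad h c := gr h (sample_of zk zC c).
Let step h c := P (vsub h (vscale eta (grad h c))).
Let traj h s := sgd_traj P gr eta zk zC h s.
Let E := expect lam mk mC.

Lemma gradient_step_in_Rn h c : H h -> in_Rn n (vsub h (vscale eta (grad h c))).
Proof.
  intros Hh i Hi. unfold vsub, vscale, grad.
  rewrite (Hsub h Hh i Hi), (Hgr_Rn h _ Hh i Hi). ring.
Qed.

Lemma step_in h c : H h -> H (step h c).
Proof. intros Hh. apply Hproj, gradient_step_in_Rn, Hh. Qed.

Lemma traj_in s : forall h, H h -> Forall H (traj h s).
Proof. induction s; intros h Hh; simpl; constructor; auto. apply IHs, step_in, Hh. Qed.

Lemma traj_length s : forall h, length (traj h s) = length s.
Proof. induction s; intros h; simpl; auto. Qed.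

Lemma step_nsq_le h c : H h ->
  nsq n (vsub (step h c) w) <=
  nsq n (vsub h w) + 2 * eta * dot n (grad h c) (vsub w h) + eta ^ 2 * G ^ 2.
Proof.
  intros Hh.
  eapply Rle_trans; [apply (projection_nsq_le n H P); auto; apply gradient_step_in_Rn, Hh|].
  replace (nsq n (vsub (vsub h (vscale eta (grad h c))) w)) with
    (nsq n (vsub h w) + 2 * eta * dot n (grad h c) (vsub w h) + eta ^ 2 * nsq n (grad h c))
    by fsum_id.
  apply Rplus_le_compat_l, Rmult_le_compat_l; [apply pow2_ge_0|].
  rewrite <- vnorm_sq. pose proof (vnorm_nonneg n (grad h c)).
  pose proof (Hgr_bd h (sample_of zk zC c) Hh). unfold grad in *. simpl. nra.
Qed.

Lemma mix_sample_loss h : mix lam mk mC (fun c => loss h (sample_of zk zC c)) = g h.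
Proof. reflexivity. Qed.

(* The sampled subgradient is unbiased: its mixture is a subgradient of g. *)
Lemma mix_grad_le h : H h -> mix lam mk mC (fun c => dot n (grad h c) (vsub w h)) <= g w - g h.
Proof.
  intros Hh.
  transitivity (mix lam mk mC (fun c => 0 + 1 * loss w (sample_of zk zC c)
                                         + (-1) * loss h (sample_of zk zC c))).
  - apply mix_le; try lra; auto. intros c.
    pose proof (Hgr_sub h (sample_of zk zC c) Hh w Hw). simpl in H0. unfold grad. lra.
  - rewrite mix_affine, !mix_sample_loss by (auto; lra). lra.
Qed.

Lemma expect_traj_sum_S T h :
  E (S T) (fun s => sumf g (traj h s)) = g h + mix lam mk mC (fun c => E T (fun s => sumf g (traj (step h c) s))).
Proof.
  unfold E. rewrite expect_S, <- mix_const_add by (auto; lra). f_equal.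
  apply functional_extensionality; intros c. rewrite <- expect_const_add by (auto; lra).
  reflexivity.
Qed.

Lemma sgd_regret T : 0 <= eta -> forall h, H h ->
  2 * eta * (E T (fun s => sumf g (traj h s)) - INR T * g w)
  <= nsq n (vsub h w) + INR T * (eta ^ 2 * G ^ 2).
Proof.
  intros Heta. induction T; intros h Hh.
  - change (E 0 (fun s => sumf g (traj h s))) with 0. simpl INR.
    pose proof (nsq_nonneg n (vsub h w)). lra.
  - rewrite expect_traj_sum_S, S_INR.
    set (K := nsq n (vsub h w) + (INR T + 1) * (eta ^ 2 * G ^ 2) + 2 * eta * (INR T * g w)).
    assert (HM : mix lam mk mC (fun c => 2 * eta * E T (fun s => sumf g (traj (step h c) s)))
              <= mix lam mk mC (fun c => K + (2 * eta) * dot n (grad h c) (vsub w h) + 0 * 0)).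
    { apply mix_le; try lra; auto. intros c.
      pose proof (IHT (step h c) (step_in h c Hh)). pose proof (step_nsq_le h c Hh).
      unfold K. lra. }
    rewrite mix_scal, mix_affine in HM by (auto; lra).
    pose proof (mix_grad_le h Hh).
    assert (2 * eta * mix lam mk mC (fun c => dot n (grad h c) (vsub w h)) <= 2 * eta * (g w - g h))
      by (apply Rmult_le_compat_l; lra).
    unfold K in HM. lra.
Qed.

(* With eta = 0 the bound of sgd_regret is empty; instead the iterates never leave w. *)
Lemma sgd_regret_eta0 T : eta = 0 -> forall h, H h -> nsq n (vsub h w) = 0 ->
  E T (fun s => sumf g (traj h s)) <= INR T * g w.
Proof.
  intros He. induction T; intros h Hh H0.
  - change (E 0 (fun s => sumf g (traj h s))) with 0. simpl INR. lra.
  - rewrite expect_traj_sum_S, S_INR.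
    assert (HM : mix lam mk mC (fun c => E T (fun s => sumf g (traj (step h c) s)))
              <= mix lam mk mC (fun c => INR T * g w + 0 * 0 + 0 * 0)).
    { apply mix_le; try lra; auto. intros c.
      assert (nsq n (vsub (step h c) w) = 0).
      { pose proof (step_nsq_le h c Hh). rewrite He, H0 in H1.
        pose proof (nsq_nonneg n (vsub (step h c) w)). lra. }
      pose proof (IHT _ (step_in h c Hh) H1). lra. }
    rewrite mix_affine in HM by (auto; lra).
    assert (Hgh : g h <= g w).
    { unfold g, g_obj.
      assert (Hd : vnorm n (vsub h w) = 0) by (unfold vnorm; fold (nsq n (vsub h w)); rewrite H0; apply sqrt_0).
      pose proof (emp_loss_sub_le n H loss gr G mk zk h w HmK Hw
                    (fun z => Hgr_sub h z Hh) (fun z => Hgr_bd h z Hh)) as Hk.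
      pose proof (emp_loss_sub_le n H loss gr G mC zC h w HmC Hw
                    (fun z => Hgr_sub h z Hh) (fun z => Hgr_bd h z Hh)) as HC.
      rewrite Hd, Rmult_0_r in Hk, HC. nra. }
    lra.
Qed.

Lemma sgd_avg_gap T D h0 : convex_on H g -> 0 < G -> (0 < T)%nat -> H h0 -> 0 <= D ->
  vnorm n (vsub h0 w) <= D -> eta = D / (G * sqrt (INR T)) ->
  E T (fun s => g (sgd_avg P gr eta zk zC h0 T s)) <= g w + D * G / sqrt (INR T).
Proof.
  intros Hgconv HG HT Hh0 HD Hd Heta.
  assert (HTpos : 0 < INR T) by (apply lt_0_INR; lia).
  set (q := sqrt (INR T)) in *.
  assert (Hq2 : q * q = INR T) by (apply sqrt_sqrt; lra).
  assert (Hqpos : 0 < q) by (apply sqrt_lt_R0; lra).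
  set (X := E T (fun s => sumf g (traj h0 s))).
  assert (HJ : E T (fun s => g (sgd_avg P gr eta zk zC h0 T s)) <= / INR T * X).
  { unfold X, E. rewrite <- expect_scal by (auto; lra). apply expect_le; auto; try lra.
    intros s Hs. unfold sgd_avg.
    pose proof (traj_length s h0) as HL. rewrite Hs in HL.
    rewrite <- HL. apply (jensen H g Hconv Hgconv).
    - intro E0. rewrite E0 in HL. simpl in HL. lia.
    - apply traj_in; auto. }
  apply Rle_trans with (/ INR T * X); auto.
  replace (/ INR T * X) with (g w + (X - INR T * g w) / INR T) by (field; lra).
  apply Rplus_le_compat_l.
  destruct HD as [HD|HD].
  - assert (Hepos : 0 < eta) by (rewrite Heta; apply Rdiv_lt_0_compat; nra).
    pose proof (sgd_regret T ltac:(lra) h0 Hh0) as HM. fold X in HM.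
    assert (Hnsq : nsq n (vsub h0 w) <= D ^ 2)
      by (rewrite <- vnorm_sq; apply pow_incr; split; [apply vnorm_nonneg|auto]).
    assert (HX : X - INR T * g w <= D * G * q).
    { apply Rmult_le_reg_l with (2 * eta); [lra|].
      replace (2 * eta * (D * G * q)) with (2 * D ^ 2) by (rewrite Heta; field; lra).
      replace (INR T * (eta ^ 2 * G ^ 2)) with (D ^ 2) in HM by (rewrite <- Hq2, Heta; field; lra).
      lra. }
    replace (D * G / q) with (D * G * q / INR T) by (rewrite <- Hq2; field; lra).
    unfold Rdiv. apply Rmult_le_compat_r; auto. left; apply Rinv_0_lt_compat; lra.
  - subst D. assert (He : eta = 0) by (rewrite Heta; unfold Rdiv; ring).
    assert (Hnsq : nsq n (vsub h0 w) = 0).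
    { rewrite <- vnorm_sq. pose proof (vnorm_nonneg n (vsub h0 w)).
      replace (vnorm n (vsub h0 w)) with 0 by lra. ring. }
    pose proof (sgd_regret_eta0 T He h0 Hh0 Hnsq). fold X in H0.
    replace (0 * G / q) with 0 by (field; lra).
    unfold Rdiv. rewrite <- (Rmult_0_l (/ INR T)).
    apply Rmult_le_compat_r; [left; apply Rinv_0_lt_compat|]; lra.
Qed.

End SGD.

Definition interp_radius (lam mu G Rd : R) : R := Rmin (2 * G * lam / (mu * (1 - lam))) Rd.

Lemma interp_radius_nonneg lam mu G Rd : 0 <= lam < 1 -> 0 < mu -> 0 < G -> 0 <= Rd ->
  0 <= interp_radius lam mu G Rd.
Proof.
  intros. apply Rmin_glb; auto.
  unfold Rdiv. apply Rmult_le_pos; [nra|]. left; apply Rinv_0_lt_compat; nra.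
Qed.

(* Either 1 - lam >= 1/2 and the first term is at most 4 G lam / mu,
   or lam >= 1/2 and Rd <= 2 lam Rd. *)
Lemma interp_radius_le lam mu G Rd : 0 <= lam < 1 -> 0 < mu -> 0 < G -> 0 <= Rd ->
  interp_radius lam mu G Rd <= lam * (4 * G / mu + 2 * Rd).
Proof.
  intros Hlam Hmu HG HRd. unfold interp_radius.
  assert (0 <= lam * (4 * G / mu)) by (apply Rmult_le_pos; [lra|left; apply Rdiv_lt_0_compat; lra]).
  destruct (Rle_or_lt (1 / 2) lam) as [hl|hl].
  - apply Rle_trans with Rd; [apply Rmin_r|].
    assert (Rd <= 2 * lam * Rd) by nra.
    replace (lam * (4 * G / mu + 2 * Rd)) with (lam * (4 * G / mu) + 2 * lam * Rd) by ring.
    lra.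
  - apply Rle_trans with (2 * G * lam / (mu * (1 - lam))); [apply Rmin_l|].
    apply Rmult_le_reg_r with (mu * (1 - lam)); [nra|].
    replace (2 * G * lam / (mu * (1 - lam)) * (mu * (1 - lam))) with (2 * G * lam) by (field; lra).
    replace (lam * (4 * G / mu + 2 * Rd) * (mu * (1 - lam)))
      with (4 * G * lam * (1 - lam) + 2 * Rd * lam * mu * (1 - lam)) by (field; lra).
    assert (0 <= 2 * Rd * lam * mu * (1 - lam)) by (repeat apply Rmult_le_pos; lra).
    assert (0 <= G * lam * (1 - 2 * lam)) by (repeat apply Rmult_le_pos; lra).
    lra.
Qed.

Lemma interp_rate_le lam mu G Rd mk mC r : 0 <= lam < 1 -> 0 < mu -> 0 < G -> 0 <= Rd ->
  (0 < mk)%nat -> (0 < mC)%nat -> r >= G ^ 2 * (4 * G / mu + 2 * Rd) ^ 2 ->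
  interp_radius lam mu G Rd * G / sqrt (r * INR mk)
  <= sqrt (lam ^ 2 / INR mk + (1 - lam) ^ 2 / INR mC).
Proof.
  intros Hlam Hmu HG HRd Hk HC Hr.
  assert (Hmk : 0 < INR mk) by (apply lt_0_INR; lia).
  assert (HmC : 0 < INR mC) by (apply lt_0_INR; lia).
  set (D := interp_radius lam mu G Rd). set (K := 4 * G / mu + 2 * Rd) in *.
  assert (HD0 : 0 <= D) by (apply interp_radius_nonneg; auto).
  assert (HDK : D <= lam * K) by (apply interp_radius_le; auto).
  assert (HK : 0 < K) by (unfold K; assert (0 < 4 * G / mu) by (apply Rdiv_lt_0_compat; lra); lra).
  assert (Hrpos : 0 < r) by (assert (0 < G ^ 2 * K ^ 2) by (apply Rmult_lt_0_compat; apply pow_lt; lra); lra).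
  assert (Hq : 0 < sqrt (r * INR mk)) by (apply sqrt_lt_R0; nra).
  rewrite <- (sqrt_pow2 (D * G / sqrt (r * INR mk)))
    by (apply Rmult_le_pos; [nra|left; apply Rinv_0_lt_compat; lra]).
  apply sqrt_le_1_alt.
  assert (0 <= (1 - lam) ^ 2 / INR mC)
    by (apply Rmult_le_pos; [apply pow2_ge_0|left; apply Rinv_0_lt_compat; lra]).
  enough ((D * G / sqrt (r * INR mk)) ^ 2 <= lam ^ 2 / INR mk) by lra.
  replace ((D * G / sqrt (r * INR mk)) ^ 2) with (D ^ 2 * G ^ 2 / (r * INR mk))
    by (unfold Rdiv; rewrite !Rpow_mult_distr, pow_inv, pow2_sqrt by nra; reflexivity).
  apply Rmult_le_reg_r with (r * INR mk); [nra|].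
  replace (D ^ 2 * G ^ 2 / (r * INR mk) * (r * INR mk)) with (D ^ 2 * G ^ 2) by (field; nra).
  replace (lam ^ 2 / INR mk * (r * INR mk)) with (lam ^ 2 * r) by (field; lra).
  assert (D ^ 2 <= lam ^ 2 * K ^ 2) by (rewrite <- Rpow_mult_distr; apply pow_incr; lra).
  assert (D ^ 2 * G ^ 2 <= lam ^ 2 * K ^ 2 * G ^ 2)
    by (apply Rmult_le_compat_r; [apply pow2_ge_0|lra]).
  assert (lam ^ 2 * (G ^ 2 * K ^ 2) <= lam ^ 2 * r)
    by (apply Rmult_le_compat_l; [apply pow2_ge_0|lra]).
  nra.
Qed.

Theorem theorem2
  (n : nat) (H : vec -> Prop) (Rd : R)
  (Z : Type) (loss : vec -> Z -> R) (gr : vec -> Z -> vec) (mu G : R)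
  (mk mC : nat) (zk zC : nat -> Z) (lam : R)
  (P : vec -> vec) (h_c h_lam : vec) (r eta : R) (T : nat)
  (Hlam : 0 <= lam < 1)
  (HmK : (0 < mk)%nat) (HmC : (0 < mC)%nat)
  (Hsub : subset_Rn n H) (Hconv : convex_in H) (Hclosed : closed_in_Rn n H)
  (Hdiam : diam_le n H Rd)
  (Hproj : is_projection n H P)
  (Hmu : 0 < mu) (HG : 0 < G)
  (Hsc : forall z, strongly_convex_on n H mu (fun h => loss h z))
  (Hgr_Rn : forall h z, H h -> in_Rn n (gr h z))
  (Hgr_sub : forall h z, H h -> is_subgradient_on n H (fun h' => loss h' z) h (gr h z))
  (Hgr_bd : forall h z, H h -> vnorm n (gr h z) <= G)
  (Hhc : is_argmin_on H (emp_loss loss mC zC) h_c)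
  (Hhlam : is_argmin_on H (g_obj loss lam mk zk mC zC) h_lam)
  (Hr : r >= G ^ 2 * (4 * G / mu + 2 * Rd) ^ 2)
  (Heta : eta = / (G * sqrt (r * INR mk)) * Rmin (2 * G * lam / (mu * (1 - lam))) Rd)
  (HT : INR T = r * INR mk) :
  expect lam mk mC T
    (fun s => g_obj loss lam mk zk mC zC (sgd_avg P gr eta zk zC h_c T s))
  <= g_obj loss lam mk zk mC zC h_lam
     + sqrt (lam ^ 2 / INR mk + (1 - lam) ^ 2 / INR mC).
Proof.
  pose proof Hhc as [Hc _]. pose proof Hhlam as [Hw _].
  assert (HRd : 0 <= Rd) by (eapply Rle_trans; [apply vnorm_nonneg|apply (Hdiam h_c h_c Hc Hc)]).
  change (Rmin (2 * G * lam / (mu * (1 - lam))) Rd) with (interp_radius lam mu G Rd) in Heta.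
  set (D := interp_radius lam mu G Rd) in *.
  assert (Hdist : vnorm n (vsub h_c h_lam) <= D).
  { unfold D, interp_radius. apply Rmin_glb; [|apply Hdiam; auto].
    apply (interp_argmin_dist_le n H mu G lam (emp_loss loss mk zk) (emp_loss loss mC zC));
      auto; try lra.
    - apply strongly_convex_emp_loss; auto.
    - apply (emp_loss_sub_le n H loss gr); auto. }
  assert (Hgconv : convex_on H (g_obj loss lam mk zk mC zC)).
  { apply (strongly_convex_convex n H mu); [lra|].
    apply strongly_convex_comb; [lra|apply strongly_convex_emp_loss; auto..]. }
  assert (HT0 : (0 < T)%nat).
  { apply INR_lt. rewrite HT. simpl INR. apply Rmult_lt_0_compat; [|apply lt_0_INR; lia].
    assert (0 < 4 * G / mu) by (apply Rdiv_lt_0_compat; lra).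
    assert (0 < G ^ 2 * (4 * G / mu + 2 * Rd) ^ 2) by (apply Rmult_lt_0_compat; apply pow_lt; lra).
    lra. }
  eapply Rle_trans.
  - apply (sgd_avg_gap n H Z loss gr G mk mC zk zC lam P eta h_lam) with (D := D); auto.
    + apply interp_radius_nonneg; auto.
    + rewrite Heta, HT. unfold Rdiv. ring.
  - apply Rplus_le_compat_l. rewrite HT. apply interp_rate_le; auto.
Qed.
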